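(* Let $M\subseteq\mathbb N$ be infinite, let $\mathcal B$ be a barrier on $M$, and let $f:\mathcal B\to c_0$ be an internal mapping which is bounded, i.e. there is $C$ such that $\|f(s)\|_\infty\le C$ for every $s\in\mathcal B$. Then for every $\varepsilon>0$ there exist an infinite set $N\subseteq M$ and a $U$-mapping $g:\mathcal B\upharpoonright N\to c_{00}$ such that $\|f(s)-g(s)\|_{\ell_1}\le\varepsilon$ for every $s\in\mathcal B\upharpoonright N$.
   Context: $\mathbb N=\{0,1,2,\dots\}$; $\mathrm{FIN}$ is the family of finite subsets of $\mathbb N$. For $X,Y\subseteq\mathbb N$: $X<Y$ means $\max X<\min Y$ (with $\emptyset<X$ and $X<\emptyset$ for all $X$); $X\sqsubseteq Y$ means $X\subseteq Y$ and $X<Y\setminus X$; $X/Y=\{m\in X: m>\max Y\}$. A family $\mathcal B\subseteq\mathrm{FIN}$ is a barrier on $M$ if every member is a subset of $M$, no member is a proper subset of another member, and every infinite $N\subseteq M$ has some $s\in\mathcal B$ with $s\sqsubseteq N$. For a family $\mathcal F$ and $N\subseteq\mathbb N$, $\mathcal F\upharpoonright N=\{s\in\mathcal F: s\subseteq N\}$. For $\xi\in c_0$, $\mathrm{supp}\,\xi=\{i:\xi(i)\ne0\}$; $c_{00}$ denotes finitely supported sequences. A map $f:\mathcal F\to c_0$ ($\mathcal F\subseteq\mathrm{FIN}$) is internal if $\mathrm{supp}\, f(s)\subseteq s$ for all $s\in\mathcal F$; it is uniform if for every $t\in\mathrm{FIN}$ all values $f(s)(\min(s/t))$, for $s\in\mathcal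 F$ with $t\sqsubseteq s$ and $s/t\neq\emptyset$, coincide; a $U$-mapping is an internal uniform mapping. *)

From Stdlib Require Import Reals.
Open Scope R_scope.

Definition natset := nat -> Prop.

Definition subset (X Y : natset) : Prop := forall k, X k -> Y k.

Definition finset (X : natset) : Prop := exists n, forall k, X k -> (k < n)%nat.

Definition infinite (X : natset) : Prop := forall n, exists k, (n <= k)%nat /\ X k.

(* X < Y : max X < min Y, with emptyset < X and X < emptyset *)
Definition set_lt (X Y : natset) : Prop := forall x y, X x -> Y y -> (x < y)%nat.

Definition setminus (X Y : natset) : natset := fun k => X k /\ ~ Y k.

Definition initial_seg (X Y : natset) : Prop := subset X Y /\ set_lt X (setminus Y X).

(* X / Y = {m in X : m > max Y}  (Y finite; for Y empty this is X) *)
Definition set_after (X Y : natset) : natset := fun m => X m /\ forall y, Y y -> (y < m)%nat.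

Definition is_min (m : nat) (X : natset) : Prop := X m /\ forall k, X k -> (m <= k)%nat.

Definition barrier (B : natset -> Prop) (M : natset) : Prop :=
  (forall s, B s -> finset s /\ subset s M) /\
  (forall s t, B s -> B t -> subset s t -> subset t s) /\
  (forall N, subset N M -> infinite N -> exists s, B s /\ initial_seg s N).

Definition restrict (F : natset -> Prop) (N : natset) : natset -> Prop :=
  fun s => F s /\ subset s N.

Definition in_c0 (x : nat -> R) : Prop := Un_cv x 0.

Definition in_c00 (x : nat -> R) : Prop := exists n, forall i, (n <= i)%nat -> x i = 0.

Definition supp (x : nat -> R) : natset := fun i => x i <> 0.

Definition internal (F : natset -> Prop) (f : natset -> nat -> R) : Prop :=
  forall s, F s -> subset (supp (f s)) s.

Definition uniform (F : natset -> Prop) (f : natset -> nat -> R) : Prop :=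
  forall t, finset t -> forall s s' m m',
    F s -> F s' -> initial_seg t s -> initial_seg t s' ->
    is_min m (set_after s t) -> is_min m' (set_after s' t) ->
    f s m = f s' m'.

Definition U_mapping (F : natset -> Prop) (f : natset -> nat -> R) : Prop :=
  internal F f /\ uniform F f.

Definition sup_norm_le (x : nat -> R) (C : R) : Prop := forall i, Rabs (x i) <= C.

Definition l1_norm_le (x : nat -> R) (e : R) : Prop :=
  exists L, infinite_sum (fun i => Rabs (x i)) L /\ L <= e.

(* For a finite set t, look at the values f(t ∪ u)(min u), where u ranges over the
   nonempty end-extensions of t that complete it to a member of B.  These u form an
   antichain of finite sets, so the Nash-Williams partition theorem (proved here by
   Galvin-Prikry combinatorial forcing) shrinks M until these values all lie within
   eps / 2^(max t + 2) of a single centre.  A fusion argument achieves this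
   simultaneously for every finite t ⊆ N, and g(s)(i) is the centre chosen for the part of s below i; this is
   uniform by construction, and the errors along s add up to at most eps. *)

From Stdlib Require Import Arith Reals Lia Lra.
From Stdlib Require Import Classical ClassicalEpsilon FunctionalExtensionality PropExtensionality.
Open Scope R_scope.

Lemma natset_ext (X Y : natset) : (forall k, X k <-> Y k) -> X = Y.
Proof.
intro H; apply functional_extensionality; intro k; apply propositional_extensionality, H.
Qed.

Definition empty : natset := fun _ => False.
Definition single (n : nat) : natset := fun k => k = n.
Definition union (X Y : natset) : natset := fun k => X k \/ Y k.
Definition below (n : nat) : natset := fun k => (k < n)%nat.
Definition above (X : natset) (n : nat) : natset := fun k => X k /\ (n < k)%nat.
Definition prefix (X : natset) (n : nat) : natset := fun k => X k /\ (k < n)%nat.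

Lemma least_witness (P : nat -> Prop) :
  (exists n, P n) -> exists m, P m /\ forall k, P k -> (m <= k)%nat.
Proof.
intro H.
destruct (dec_inh_nat_subset_has_unique_least_element P (fun n => classic (P n)) H)
  as [m [Hm _]].
exists m; exact Hm.
Qed.

Lemma is_min_unique m m' X : is_min m X -> is_min m' X -> m = m'.
Proof. intros [H1 H2] [H1' H2']. specialize (H2 _ H1'); specialize (H2' _ H1); lia. Qed.

Lemma infinite_above X n : infinite X -> infinite (above X n).
Proof.
intros H m. destruct (H (Nat.max m (S n))) as [k [Hk Xk]].
exists k; split; [lia | split; [exact Xk | lia]].
Qed.

Lemma infinite_after X s : infinite X -> finset s -> infinite (set_after X s).
Proof.
intros H [b Hb] m. destruct (H (Nat.max m b)) as [k [Hk Xk]].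
exists k; split; [lia | split; [exact Xk |]].
intros y Hy; specialize (Hb y Hy); lia.
Qed.

Lemma finset_union s t : finset s -> finset t -> finset (union s t).
Proof.
intros [a Ha] [b Hb]; exists (Nat.max a b).
intros k [H | H]; [specialize (Ha k H) | specialize (Hb k H)]; lia.
Qed.

Lemma finset_empty : finset empty.
Proof. exists 0%nat; intros k []. Qed.

Lemma finset_single n : finset (single n).
Proof. exists (S n); intros k Hk; unfold single in Hk; lia. Qed.

Lemma finset_subset s t : subset s t -> finset t -> finset s.
Proof. intros H [b Hb]; exists b; intros k Hk; apply Hb, H, Hk. Qed.

Lemma subset_below_empty s : subset s (below 0) -> s = empty.
Proof.
intro H; apply natset_ext; intro k; split; [| intros []].
intro Hk; specialize (H k Hk); unfold below in H; lia.
Qed.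

Lemma below_succ_cases s n :
  subset s (below (S n)) -> s = prefix s n \/ s = union (prefix s n) (single n).
Proof.
intro H. destruct (classic (s n)) as [Hn | Hn]; [right | left];
  apply natset_ext; intro k; unfold prefix, union, single; split.
- intro Hk. destruct (Nat.eq_dec k n) as [-> | Hne]; [now right | left].
  split; [exact Hk |]. specialize (H k Hk); unfold below in H; lia.
- now intros [[Hk _] | ->].
- intro Hk. split; [exact Hk |]. specialize (H k Hk); unfold below in H.
  destruct (Nat.eq_dec k n) as [-> | Hne]; [contradiction | lia].
- now intros [Hk _].
Qed.

Lemma prefix_below s n : subset (prefix s n) (below n).
Proof. now intros k [_ Hk]. Qed.

Lemma bounded_set_ind (P : natset -> Prop) :
  P empty ->
  (forall s n, subset s (below n) -> P s -> P (union s (single n))) ->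
  forall n s, subset s (below n) -> P s.
Proof.
intros H0 HS n; induction n as [| n IH]; intros s Hs.
- now rewrite (subset_below_empty s Hs).
- destruct (below_succ_cases s n Hs) as [E | E]; rewrite E.
  + apply IH, prefix_below.
  + apply HS; [apply prefix_below | apply IH, prefix_below].
Qed.

Lemma dense_on_bounded_sets (Q : natset -> natset -> Prop) :
  (forall s A A', finset s -> Q s A' -> subset A A' -> Q s A) ->
  (forall s A, finset s -> infinite A -> exists A', infinite A' /\ subset A' A /\ Q s A') ->
  forall n A, infinite A ->
  exists A', infinite A' /\ subset A' A /\ forall s, subset s (below n) -> Q s A'.
Proof.
intros Qmono Qdense n; revert Q Qmono Qdense.
induction n as [| n IH]; intros Q Qmono Qdense A HA.
- destruct (Qdense empty A) as [A' [H1 [H2 H3]]]; [exact finset_empty | exact HA |].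
  exists A'; repeat split; [exact H1 | exact H2 |].
  intros s Hs; now rewrite (subset_below_empty s Hs).
- destruct (IH (fun s A => Q s A /\ Q (union s (single n)) A)) with (A := A)
    as [A' [H1 [H2 H3]]]; [| | exact HA |].
  + intros s B B' Hs [Q1 Q2] HB; split; apply (Qmono _ _ B'); auto.
    apply finset_union; [exact Hs | apply finset_single].
  + intros s B Hs HB.
    destruct (Qdense s B Hs HB) as [B1 [E1 [E2 E3]]].
    destruct (Qdense (union s (single n)) B1) as [B2 [F1 [F2 F3]]];
      [apply finset_union; [exact Hs | apply finset_single] | exact E1 |].
    exists B2; repeat split; [exact F1 | intros k Hk; apply E2, F2, Hk | | exact F3].
    apply (Qmono _ _ B1); [exact Hs | exact E3 | exact F2].
  + exists A'; repeat split; [exact H1 | exact H2 |].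
    intros s Hs. destruct (below_succ_cases s n Hs) as [E | E]; rewrite E;
      apply (H3 _ (prefix_below s n)).
Qed.

(** * Fusion *)

Section Fusion.

Variable P : natset -> natset -> Prop.
Hypothesis P_tail :
  forall s A A', finset s -> P s A' -> subset (set_after A s) A' -> P s A.
Hypothesis P_dense :
  forall s A, finset s -> infinite A -> exists A', infinite A' /\ subset A' A /\ P s A'.

Definition shrinks (n : nat) (X X' : natset) : Prop :=
  infinite X' /\ subset X' X /\ forall s, subset s (below n) -> P s X'.

Definition shrink (n : nat) (X : natset) : natset :=
  epsilon (inhabits X) (fun X' => infinite X -> shrinks n X X').

Lemma shrink_spec n X : infinite X -> shrinks n X (shrink n X).
Proof.
intro HX.
destruct (dense_on_bounded_sets P) with (n := n) (A := X) as [X' HX'];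
  [| exact P_dense | exact HX |].
- intros s A A' Hs HP HA. apply (P_tail s A A' Hs HP). intros k [Hk _]; apply HA, Hk.
- apply (epsilon_spec (inhabits X) (fun X' => infinite X -> shrinks n X X')); [| exact HX].
  now exists X'.
Qed.

Definition pick (X : natset) : nat := epsilon (inhabits 0%nat) X.

Lemma pick_spec X : infinite X -> X (pick X).
Proof.
intro HX. unfold pick; apply epsilon_spec.
destruct (HX 0%nat) as [k [_ Hk]]; now exists k.
Qed.

Variable A : natset.
Hypothesis A_inf : infinite A.

Fixpoint stage (k : nat) : natset :=
  match k with
  | O => shrink 0 A
  | S k => let X := stage k in shrink (S (pick X)) (above X (pick X))
  end.

Definition point (k : nat) : nat := pick (stage k).

Lemma stage_spec k : infinite (stage k) /\ subset (stage k) A.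
Proof.
induction k as [| k [IH1 IH2]]; simpl.
- destruct (shrink_spec 0 A A_inf) as [H1 [H2 _]]; now split.
- destruct (shrink_spec (S (point k)) (above (stage k) (point k))) as [H1 [H2 _]];
    [now apply infinite_above |].
  split; [exact H1 | intros x Hx; apply IH2, (H2 x Hx)].
Qed.

Lemma point_in_stage k : stage k (point k).
Proof. unfold point; apply pick_spec, stage_spec. Qed.

Lemma stage_succ k : subset (stage (S k)) (above (stage k) (point k)).
Proof.
destruct (shrink_spec (S (point k)) (above (stage k) (point k))) as [_ [H _]];
  [apply infinite_above, stage_spec | exact H].
Qed.

Lemma stage_antitone k m : (k <= m)%nat -> subset (stage m) (stage k).
Proof.
induction 1 as [| m _ IH]; intros x Hx; [exact Hx |].
apply IH, (stage_succ m x Hx).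
Qed.

Lemma point_lt k m : (k < m)%nat -> (point k < point m)%nat.
Proof.
intro H.
pose proof (stage_antitone (S k) m H _ (point_in_stage m)) as Hm.
now destruct (stage_succ k _ Hm).
Qed.

Lemma point_le k m : (k <= m)%nat -> (point k <= point m)%nat.
Proof.
intro H; destruct (Nat.eq_dec k m) as [-> | Hne]; [lia |].
pose proof (point_lt k m); lia.
Qed.

Lemma point_lt_inv k m : (point k < point m)%nat -> (k < m)%nat.
Proof.
intro H; destruct (le_lt_dec m k) as [Hle | Hlt]; [| exact Hlt].
pose proof (point_le m k Hle); lia.
Qed.

Lemma point_ge k : (k <= point k)%nat.
Proof. induction k as [| k IH]; [lia | pose proof (point_lt k (S k)); lia]. Qed.

Lemma stage_covers k s :
  (forall y, s y -> exists i, (i < k)%nat /\ y = point i) -> P s (stage k).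
Proof.
destruct k as [| k]; intro Hs; simpl.
- apply (shrink_spec 0 A A_inf).
  intros y Hy; destruct (Hs y Hy) as [i [Hi _]]; lia.
- destruct (shrink_spec (S (point k)) (above (stage k) (point k))) as [_ [_ H]];
    [apply infinite_above, stage_spec |].
  apply H; intros y Hy; destruct (Hs y Hy) as [i [Hi ->]].
  pose proof (point_le i k); unfold below; lia.
Qed.

Definition fusion_set : natset := fun x => exists k, x = point k.

Lemma fusion_set_spec :
  infinite fusion_set /\ subset fusion_set A /\
  forall s, finset s -> subset s fusion_set -> P s fusion_set.
Proof.
split; [| split].
- intro n; exists (point n); split; [apply point_ge | now exists n].
- intros x [k ->]. apply (stage_spec k), point_in_stage.
- intros s Hs HsN.
  destruct (least_witness (fun j => forall y, s y -> (y < point j)%nat)) as [j [Hj Hmin]].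
  { destruct Hs as [b Hb]. exists b; intros y Hy.
    specialize (Hb y Hy); pose proof (point_ge b); lia. }
  apply (P_tail s _ (stage j) Hs).
  + apply stage_covers. intros y Hy. destruct (HsN y Hy) as [i ->].
    exists i; split; [apply point_lt_inv, Hj, Hy | reflexivity].
  + intros x [[m ->] Hbeyond]. apply (stage_antitone j m (Hmin m Hbeyond)), point_in_stage.
Qed.

End Fusion.

Lemma fusion (P : natset -> natset -> Prop) :
  (forall s A A', finset s -> P s A' -> subset (set_after A s) A' -> P s A) ->
  (forall s A, finset s -> infinite A -> exists A', infinite A' /\ subset A' A /\ P s A') ->
  forall A, infinite A ->
  exists N, infinite N /\ subset N A /\ forall s, finset s -> subset s N -> P s N.
Proof. intros HP1 HP2 A HA. exists (fusion_set P A). now apply fusion_set_spec. Qed.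

(** * The Nash-Williams partition theorem *)

Lemma initial_seg_union_after u X : initial_seg u (union u (set_after X u)).
Proof.
split; [intros k Hk; now left |].
intros x y Hx [[Hy | [_ Hy]] Hn]; [contradiction | now apply Hy].
Qed.

Lemma union_empty_after X : union empty (set_after X empty) = X.
Proof.
apply natset_ext; intro k; unfold union, set_after, empty; split; [tauto |].
intro Hk; right; split; [exact Hk | now intros y []].
Qed.

Lemma after_after X s : set_after (set_after X s) s = set_after X s.
Proof. apply natset_ext; intro k; unfold set_after; tauto. Qed.

Lemma union_after_min X s n : is_min n (set_after X s) ->
  union (union s (single n)) (set_after X (union s (single n))) = union s (set_after X s).
Proof.
intros [[Xn Hn] Hmin]; apply natset_ext; intro k; unfold union, single, set_after; split.
- intros [[H | ->] | [H1 H2]]; [now left | now right | right; split; auto].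
- intros [H | [H1 H2]]; [now left; left |].
  assert (n <= k)%nat by (apply Hmin; split; auto).
  destruct (Nat.eq_dec n k) as [-> | Hne]; [now left; right |].
  right; split; [exact H1 |]. intros y [Hy | ->]; [now apply H2 | lia].
Qed.

Section NashWilliams.

Variable F : natset -> Prop.
Hypothesis F_fin : forall u, F u -> finset u.

Definition accepts (s A : natset) : Prop :=
  forall X, infinite X -> subset X A ->
  exists u, F u /\ initial_seg u (union s (set_after X s)).

Definition rejects (s A : natset) : Prop :=
  forall A', infinite A' -> subset A' A -> ~ accepts s A'.

Definition decides (s A : natset) : Prop := accepts s A \/ rejects s A.

Lemma accepts_subset s A A' : accepts s A' -> subset A A' -> accepts s A.
Proof. intros H HA X HX HXA. apply H; [exact HX | intros k Hk; apply HA, HXA, Hk]. Qed.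

Lemma accepts_member u A : F u -> accepts u A.
Proof. intros Fu X _ _. exists u; split; [exact Fu | apply initial_seg_union_after]. Qed.

Lemma decides_tail s A A' :
  finset s -> decides s A' -> subset (set_after A s) A' -> decides s A.
Proof.
intros Hs [Hacc | Hrej] HA; [left | right].
- intros X HX HXA.
  destruct (Hacc (set_after X s)) as [u Hu];
    [now apply infinite_after | intros x [Xx Hx]; apply HA; split; auto |].
  rewrite after_after in Hu. now exists u.
- intros A2 HA2 HA2A Hacc. apply (Hrej (set_after A2 s)).
  + now apply infinite_after.
  + intros x [Xx Hx]; apply HA; split; auto.
  + apply (accepts_subset _ _ A2 Hacc). now intros x [Hx _].
Qed.

Lemma decides_dense s A :
  infinite A -> exists A', infinite A' /\ subset A' A /\ decides s A'.
Proof.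
intro HA. destruct (classic (rejects s A)) as [Hrej | Hrej].
- exists A; repeat split; [exact HA | now intros k Hk | now right].
- apply not_all_ex_not in Hrej as [A' Hrej].
  apply imply_to_and in Hrej as [H1 Hrej]. apply imply_to_and in Hrej as [H2 Hrej].
  exists A'; repeat split; [exact H1 | exact H2 | left; now apply NNPP].
Qed.

Lemma accepts_of_extensions s Y A :
  finset s -> subset Y A -> (forall n, Y n -> accepts (union s (single n)) A) -> accepts s Y.
Proof.
intros Hs HYA HY X HX HXY.
destruct (least_witness (set_after X s)) as [n Hn].
{ destruct (infinite_after X s HX Hs 0%nat) as [k [_ Hk]]; now exists k. }
destruct (HY n (HXY n (proj1 (proj1 Hn))) X HX) as [u Hu];
  [intros k Hk; apply HYA, HXY, Hk |].
rewrite (union_after_min X s n Hn) in Hu. now exists u.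
Qed.

Section Decided.

Variable N1 : natset.
Hypothesis N1_inf : infinite N1.
Hypothesis N1_decides : forall s, finset s -> subset s N1 -> decides s N1.

Lemma rejects_extensions_eventually s :
  finset s -> subset s N1 -> rejects s N1 ->
  exists K, forall n, set_after N1 s n -> (K <= n)%nat -> rejects (union s (single n)) N1.
Proof.
intros Hs HsN Hrej. apply NNPP; intro Hnot.
set (Y := fun n => set_after N1 s n /\ accepts (union s (single n)) N1).
apply (Hrej Y); [| now intros n [[Hn _] _] |].
- intro K. apply NNPP; intro HK. apply Hnot; exists K. intros n Hn HKn.
  destruct (N1_decides (union s (single n))) as [Hacc | Hr];
    [apply finset_union; [exact Hs | apply finset_single]
    | intros k [Hk | ->]; [apply HsN, Hk | apply Hn] | | exact Hr].
  exfalso; apply HK; exists n; split; [exact HKn | split; [exact Hn | exact Hacc]].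
- apply (accepts_of_extensions s Y N1 Hs); [now intros n [[Hn _] _] | now intros n [_ Hacc]].
Qed.

Lemma rejection_hereditary :
  exists N2, infinite N2 /\ subset N2 N1 /\
  forall s, finset s -> subset s N2 -> rejects s N1 ->
  forall n, set_after N2 s n -> rejects (union s (single n)) N1.
Proof.
set (Q := fun s A => subset s N1 -> rejects s N1 ->
  forall n, set_after A s n -> N1 n -> rejects (union s (single n)) N1).
destruct (fusion Q) with (A := N1) as [N2 [HN2 [HN2N1 HQ]]]; [| | exact N1_inf |].
- intros s A A' _ H HA HsN Hrej n Hn.
  apply H; [exact HsN | exact Hrej | split; [apply HA, Hn | apply Hn]].
- intros s A Hs HA. destruct (classic (subset s N1 /\ rejects s N1)) as [[HsN Hrej] | Hn].
  + destruct (rejects_extensions_eventually s Hs HsN Hrej) as [K HK].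
    exists (above A K); repeat split; [now apply infinite_above | now intros k [Hk _] |].
    intros _ _ n [[Hn HnK] Hbeyond] HN1n. apply HK; [split; [exact HN1n | exact Hbeyond] | lia].
  + exists A; repeat split; [exact HA | now intros k Hk |].
    intros HsN Hrej; exfalso; now apply Hn.
- exists N2; repeat split; [exact HN2 | exact HN2N1 |].
  intros s Hs HsN Hrej n Hn.
  apply (HQ s Hs HsN); [intros k Hk; apply HN2N1, HsN, Hk | exact Hrej | exact Hn |].
  apply HN2N1, Hn.
Qed.

End Decided.

Theorem nash_williams A : infinite A ->
  exists N, infinite N /\ subset N A /\
  ((forall X, infinite X -> subset X N -> exists u, F u /\ initial_seg u X) \/
   (forall X, infinite X -> subset X N -> forall u, F u -> ~ initial_seg u X)).
Proof.
intro HA.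
destruct (fusion decides) with (A := A) as [N1 [HN1 [HN1A Hdec]]];
  [intros s B B' Hs H HB; now apply (decides_tail s B B')
  | intros s B _ HB; now apply decides_dense | exact HA |].
destruct (Hdec empty) as [Hacc | Hrej]; [exact finset_empty | intros k [] | |].
- exists N1; repeat split; [exact HN1 | exact HN1A |]. left; intros X HX HXN.
  rewrite <- (union_empty_after X). now apply Hacc.
- destruct (rejection_hereditary N1 HN1 Hdec) as [N2 [HN2 [HN2N1 Hher]]].
  exists N2; repeat split; [exact HN2 | intros k Hk; apply HN1A, HN2N1, Hk |].
  right; intros X HX HXN u Fu Hu.
  (* Rejection spreads from [empty] to every finite subset of [N2], whereas a
     member of [F] accepts itself. *)
  assert (Hall : forall n s, subset s (below n) -> subset s N2 -> rejects s N1).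
  { apply (bounded_set_ind (fun s => subset s N2 -> rejects s N1)); [now intros _ |].
    intros s n Hs IH HsnN. apply Hher.
    - apply (finset_subset s (below n) Hs). exists n; now intros k Hk.
    - intros k Hk; apply HsnN; now left.
    - apply IH; intros k Hk; apply HsnN; now left.
    - split; [apply HsnN; now right | intros y Hy; apply Hs, Hy]. }
  destruct (F_fin u Fu) as [b Hb].
  apply (Hall b u Hb (fun k Hk => HXN k (proj1 Hu k Hk)) N1 HN1); [now intros k Hk |].
  now apply accepts_member.
Qed.

End NashWilliams.

Definition antichain (G : natset -> Prop) : Prop :=
  forall u v, G u -> G v -> subset u v -> subset v u.

Lemma initial_segs_comparable u v X :
  initial_seg u X -> initial_seg v X -> subset u v \/ subset v u.
Proof.
intros [Hu1 Hu2] [Hv1 Hv2].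
destruct (classic (subset u v)) as [H | H]; [now left | right].
apply not_all_ex_not in H as [x Hx]. apply imply_to_and in Hx as [ux nvx].
intros y vy. apply NNPP; intro nuy.
assert (y < x)%nat by (apply Hv2; [exact vy | split; [apply Hu1, ux | exact nvx]]).
assert (x < y)%nat by (apply Hu2; [exact ux | split; [apply Hv1, vy | exact nuy]]).
lia.
Qed.

Lemma antichain_initial_seg_unique G u v X : antichain G -> G u -> G v ->
  initial_seg u X -> initial_seg v X -> u = v.
Proof.
intros HG Gu Gv Hu Hv.
destruct (initial_segs_comparable u v X Hu Hv) as [H | H];
  apply natset_ext; intro k; split; intro Hk; auto.
- apply (HG u v Gu Gv H k Hk).
- apply (HG v u Gv Gu H k Hk).
Qed.

Lemma end_extension v N : finset v -> subset v N -> infinite N ->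
  infinite (union v (set_after N v)) /\ subset (union v (set_after N v)) N /\
  initial_seg v (union v (set_after N v)).
Proof.
intros Hv HvN HN. split; [| split].
- intro m. destruct (infinite_after N v HN Hv m) as [k [Hk Hk2]].
  exists k; split; [exact Hk | now right].
- intros k [Hk | [Hk _]]; [apply HvN, Hk | exact Hk].
- apply initial_seg_union_after.
Qed.

Lemma antichain_members_of_covering G (Q : natset -> Prop) N :
  (forall u, G u -> finset u) -> antichain G -> infinite N ->
  (forall X, infinite X -> subset X N -> exists u, (G u /\ Q u) /\ initial_seg u X) ->
  forall v, G v -> subset v N -> Q v.
Proof.
intros Gfin HG HN H v Gv HvN.
destruct (end_extension v N (Gfin v Gv) HvN HN) as [E1 [E2 E3]].
destruct (H _ E1 E2) as [u [[Gu Qu] Hu]].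
now rewrite <- (antichain_initial_seg_unique G u v _ HG Gu Gv Hu E3).
Qed.

Theorem antichain_ramsey G (Q : natset -> Prop) A :
  (forall u, G u -> finset u) -> antichain G -> infinite A ->
  exists N, infinite N /\ subset N A /\
  ((forall u, G u -> subset u N -> Q u) \/ (forall u, G u -> subset u N -> ~ Q u)).
Proof.
intros Gfin HG HA.
destruct (nash_williams (fun u => G u /\ Q u)) with (A := A)
  as [N1 [HN1 [HN1A [Hcov1 | Hnone1]]]]; [now intros u [Gu _]; apply Gfin | exact HA | |].
- exists N1; repeat split; [exact HN1 | exact HN1A |].
  left; now apply (antichain_members_of_covering G Q N1).
- exists N1; repeat split; [exact HN1 | exact HN1A |].
  right; intros v Gv HvN Qv.
  destruct (end_extension v N1 (Gfin v Gv) HvN HN1) as [E1 [E2 E3]].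
  exact (Hnone1 _ E1 E2 v (conj Gv Qv) E3).
Qed.

(** * Summing the errors *)

Lemma half_pow_pos n : 0 < (/2)^n.
Proof. apply pow_lt; lra. Qed.

Lemma half_pow_antitone m n : (m <= n)%nat -> (/2)^n <= (/2)^m.
Proof. induction 1 as [| n _ IH]; [lra | simpl; pose proof (half_pow_pos n); lra]. Qed.

Lemma half_pow_small c d : 0 < d -> exists K, c * (/2)^K <= d.
Proof.
intro Hd. pose proof (Rabs_pos c) as Hc.
destruct (pow_lt_1_zero (/2)) with (y := d / (Rabs c + 1)) as [K HK];
  [rewrite Rabs_pos_eq; lra | apply Rdiv_lt_0_compat; lra |].
exists K. specialize (HK K (le_n K)). pose proof (half_pow_pos K) as Hpos.
rewrite Rabs_pos_eq in HK by lra.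
apply Rmult_lt_compat_l with (r := Rabs c + 1) in HK; [| lra].
replace ((Rabs c + 1) * (d / (Rabs c + 1))) with d in HK by (field; lra).
pose proof (Rle_abs c). nra.
Qed.

(* The error allowed at a coordinate whose predecessors in [s] form [t]:
   [eps / 2^(max t + 2)], or [eps / 2] if [t] is empty.  Along [s] these
   bounds add up to at most [eps]. *)
Definition small_error (eps : R) (t : natset) (r : R) : Prop :=
  forall b, (b = 0 \/ t (pred b))%nat -> r <= eps * (/2)^(S b).

Lemma small_error_of_bound eps t n r : 0 <= eps ->
  (forall x, t x -> (x < n)%nat) -> r <= eps * (/2)^(S n) -> small_error eps t r.
Proof.
intros He Ht Hr b Hb.
assert (Hbn : (b <= n)%nat) by (destruct Hb as [-> | Hb]; [lia | specialize (Ht _ Hb); lia]).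
pose proof (half_pow_antitone (S b) (S n) ltac:(lia)).
assert (eps * (/2)^(S n) <= eps * (/2)^(S b)) by (apply Rmult_le_compat_l; lra).
lra.
Qed.

Fixpoint partial_sum (a : nat -> R) (n : nat) : R :=
  match n with O => 0 | S n => partial_sum a n + a n end.

Lemma partial_sum_small_errors eps s a : 0 <= eps ->
  (forall i, ~ s i -> a i = 0) -> (forall i, s i -> small_error eps (prefix s i) (a i)) ->
  forall n, exists b, (b <= n)%nat /\ (b = 0 \/ s (pred b))%nat /\
  partial_sum a n + eps * (/2)^b <= eps.
Proof.
(* The witness [b] is one more than the largest element of [s] below [n], or 0. *)
intros He Hout Hin n; induction n as [| n [b [Hbn [Hb Hsum]]]].
- exists 0%nat; simpl; repeat split; [lia | now left | lra].
- destruct (classic (s n)) as [Hn | Hn].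
  + exists (S n); repeat split; [lia | right; exact Hn |]. simpl.
    assert (Ha : a n <= eps * (/2)^(S b)).
    { apply (Hin n Hn). destruct b as [| b']; [now left |].
      destruct Hb as [Hb | Hb]; [lia | right; split; [exact Hb | simpl; lia]]. }
    pose proof (half_pow_antitone (S b) (S n) ltac:(lia)).
    assert (eps * (/2)^(S n) <= eps * (/2)^(S b)) by (apply Rmult_le_compat_l; lra).
    simpl in *; lra.
  + exists b; repeat split; [lia | exact Hb |]. simpl. rewrite (Hout n Hn). lra.
Qed.

Lemma sum_f_R0_partial_sum a n : sum_f_R0 a n = partial_sum a (S n).
Proof. induction n as [| n IH]; simpl in *; [lra | rewrite IH; reflexivity]. Qed.

Lemma infinite_sum_finite_support a n :
  (forall i, (n <= i)%nat -> a i = 0) -> infinite_sum a (partial_sum a n).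
Proof.
intros Ha e He. exists n. intros m Hm. unfold R_dist.
assert (Hconst : forall k, partial_sum a (n + k) = partial_sum a n).
{ induction k as [| k IH]; [now rewrite Nat.add_0_r |].
  rewrite Nat.add_succ_r; simpl. rewrite IH, (Ha (n + k)%nat) by lia. lra. }
rewrite sum_f_R0_partial_sum.
replace (S m) with (n + (S m - n))%nat by lia.
rewrite Hconst, Rminus_diag, Rabs_R0. exact He.
Qed.

Lemma l1_norm_le_small_errors eps s x : 0 <= eps -> finset s ->
  (forall i, ~ s i -> x i = 0) ->
  (forall i, s i -> small_error eps (prefix s i) (Rabs (x i))) ->
  l1_norm_le x eps.
Proof.
intros He [n Hn] Hout Hin.
assert (Hzero : forall i, ~ s i -> Rabs (x i) = 0)
  by (intros i Hi; rewrite (Hout i Hi); apply Rabs_R0).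
exists (partial_sum (fun i => Rabs (x i)) n). split.
- apply infinite_sum_finite_support. intros i Hi. apply Hzero. intro Hs; specialize (Hn i Hs); lia.
- destruct (partial_sum_small_errors eps s (fun i => Rabs (x i)) He Hzero Hin n) as [b [_ [_ Hb]]].
  pose proof (half_pow_pos b). nra.
Qed.

(** * Approximation by a U-mapping *)

Lemma prefix_at_min s t m :
  initial_seg t s -> is_min m (set_after s t) -> prefix s m = t.
Proof.
intros [Hts Hlt] [[sm Hm] Hmin]. apply natset_ext; intro k; split.
- intros [sk km]. apply NNPP; intro nt.
  assert (m <= k)%nat
    by (apply Hmin; split; [exact sk | intros y ty; apply Hlt; [exact ty | now split]]).
  lia.
- intro tk; split; [apply Hts, tk | apply Hm, tk].
Qed.

Section Approximation.

Variables (B : natset -> Prop) (f : natset -> nat -> R) (C eps : R).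
Hypothesis B_fin : forall s, B s -> finset s.
Hypothesis B_antichain : antichain B.
Hypothesis f_bounded : forall s, B s -> forall i, Rabs (f s i) <= C.
Hypothesis eps_pos : 0 < eps.

Definition continuation (t u : natset) : Prop :=
  B (union t u) /\ set_lt t u /\ exists x, u x.

Lemma continuation_finite t u : continuation t u -> finset u.
Proof.
intros [Bu _]. apply (finset_subset u (union t u)); [intros k Hk; now right | apply B_fin, Bu].
Qed.

Lemma continuation_antichain t : antichain (continuation t).
Proof.
intros u v [Bu [Ltu _]] [Bv [Ltv _]] Huv x vx.
assert (H : subset (union t u) (union t v))
  by (intros k [Hk | Hk]; [left | right; apply Huv]; auto).
destruct (B_antichain _ _ Bu Bv H x (or_intror vx)) as [tx | ux]; [| exact ux].
specialize (Ltv x x tx vx); lia.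
Qed.

Definition values_within (t A : natset) (a b : R) : Prop :=
  forall u, continuation t u -> subset u A -> forall m, is_min m u -> a <= f (union t u) m <= b.

Lemma narrow_values t k A : infinite A ->
  exists N a, infinite N /\ subset N A /\ values_within t N a (a + 2 * C * (/2)^k).
Proof.
revert A; induction k as [| k IH]; intros A HA.
- exists A, (- C); split; [exact HA | split; [now intros x Hx |]].
  intros u [Bu _] _ m _. pose proof (f_bounded _ Bu m) as Hf.
  pose proof (Rle_abs (f (union t u) m)); pose proof (Rle_abs (- f (union t u) m)).
  rewrite Rabs_Ropp in *; simpl; split; lra.
- destruct (IH A HA) as [N [a [HN [HNA Ha]]]].
  assert (Hhalf : 2 * C * (/2)^(S k) = C * (/2)^k) by (simpl; field).
  rewrite Hhalf. set (mid := a + C * (/2)^k).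
  destruct (antichain_ramsey (continuation t)
    (fun u => forall m, is_min m u -> f (union t u) m <= mid) N
    (continuation_finite t) (continuation_antichain t) HN) as [N' [HN' [HN'N [Hlow | Hhigh]]]];
    [exists N', a | exists N', mid];
    (split; [exact HN' | split; [intros x Hx; apply HNA, HN'N, Hx |]]);
    intros u Hu HuN' m Hm;
    pose proof (Ha u Hu (fun x Hx => HN'N x (HuN' x Hx)) m Hm) as Hbounds.
  + pose proof (Hlow u Hu HuN' m Hm). unfold mid in *; split; lra.
  + specialize (Hhigh u Hu HuN'). apply not_all_ex_not in Hhigh as [m0 Hm0].
    apply imply_to_and in Hm0 as [Hm0 Hgt].
    rewrite <- (is_min_unique _ _ _ Hm0 Hm) in *. unfold mid in *; split; lra.
Qed.

Definition centered (t A : natset) (c : R) : Prop :=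
  forall u, continuation t u -> subset u A -> forall m, is_min m u ->
  small_error eps t (Rabs (f (union t u) m - c)).

Definition stable (t A : natset) : Prop := exists c, centered t A c.

Lemma stable_tail t A A' : stable t A' -> subset (set_after A t) A' -> stable t A.
Proof.
intros [c Hc] HA. exists c. intros u Hu HuA m Hm. apply Hc; [exact Hu | | exact Hm].
intros x Hx. apply HA; split; [apply HuA, Hx |].
intros y Hy; destruct Hu as [_ [Hlt _]]; now apply Hlt.
Qed.

Lemma stable_dense t A : finset t -> infinite A ->
  exists A', infinite A' /\ subset A' A /\ stable t A'.
Proof.
intros [n Hn] HA.
assert (Hd : 0 < eps * (/2)^(S n)) by (pose proof (half_pow_pos (S n)); nra).
destruct (half_pow_small (2 * C) _ Hd) as [K HK].
destruct (narrow_values t K A HA) as [N [a [HN [HNA Ha]]]].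
exists N; repeat split; [exact HN | exact HNA |]. exists a.
intros u Hu HuN m Hm. apply (small_error_of_bound eps t n); [lra | exact Hn |].
specialize (Ha u Hu HuN m Hm). apply Rabs_le; lra.
Qed.

Section Centers.

Variable N : natset.

Definition center (t : natset) : R := epsilon (inhabits 0) (centered t N).

Definition approx (s : natset) (i : nat) : R :=
  if excluded_middle_informative (s i) then center (prefix s i) else 0.

Lemma approx_outside s i : ~ s i -> approx s i = 0.
Proof. intro H; unfold approx; now destruct (excluded_middle_informative (s i)). Qed.

Lemma approx_internal : internal (restrict B N) approx.
Proof. intros s _ i Hi. apply NNPP; intro Hs. now apply Hi, approx_outside. Qed.

Lemma approx_c00 s : restrict B N s -> in_c00 (approx s).
Proof.
intros [Bs _]. destruct (B_fin s Bs) as [b Hb]. exists b. intros i Hi.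
apply approx_outside. intro Hs; specialize (Hb i Hs); lia.
Qed.

Lemma approx_uniform : uniform (restrict B N) approx.
Proof.
intros t _ s s' m m' _ _ Ht Ht' Hm Hm'. unfold approx.
destruct (excluded_middle_informative (s m)) as [_ | Hn]; [| now destruct Hm as [[? _] _]].
destruct (excluded_middle_informative (s' m')) as [_ | Hn]; [| now destruct Hm' as [[? _] _]].
now rewrite (prefix_at_min s t m Ht Hm), (prefix_at_min s' t m' Ht' Hm').
Qed.

Hypothesis N_stable : forall t, finset t -> subset t N -> stable t N.

Lemma approx_error s i : B s -> subset s N -> s i ->
  small_error eps (prefix s i) (Rabs (f s i - approx s i)).
Proof.
intros Bs HsN Hi. unfold approx.
destruct (excluded_middle_informative (s i)) as [_ | Hn]; [| contradiction].
set (u := fun x => s x /\ (i <= x)%nat).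
assert (Es : union (prefix s i) u = s).
{ apply natset_ext; intro k; unfold union, prefix, u; split; [tauto |].
  intro Hk; destruct (le_lt_dec i k); tauto. }
assert (Hc : centered (prefix s i) N (center (prefix s i))).
{ unfold center; apply epsilon_spec, N_stable; [| intros k [Hk _]; apply HsN, Hk].
  apply (finset_subset _ s); [now intros k [Hk _] | apply B_fin, Bs]. }
replace (f s i) with (f (union (prefix s i) u) i) by now rewrite Es.
apply Hc.
- split; [now rewrite Es | split; [intros x y [_ Hx] [_ Hy]; lia | now exists i]].
- intros k [Hk _]; apply HsN, Hk.
- split; [split; [exact Hi | lia] | now intros k [_ Hk]].
Qed.

Lemma approx_l1_error s : internal B f -> restrict B N s ->
  l1_norm_le (fun i => f s i - approx s i) eps.
Proof.
intros f_internal [Bs HsN].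
apply (l1_norm_le_small_errors eps s);
  [lra | apply B_fin, Bs | | intros i Hi; now apply approx_error].
intros i Hi. rewrite approx_outside by exact Hi.
assert (f s i = 0) as -> by (apply NNPP; intro Hne; apply Hi, (f_internal s Bs i Hne)).
lra.
Qed.

End Centers.

End Approximation.

Theorem mainTheorem1 (M : natset) (B : natset -> Prop) (f : natset -> nat -> R) :
  infinite M -> barrier B M ->
  (forall s, B s -> in_c0 (f s)) ->
  internal B f ->
  (exists C, forall s, B s -> sup_norm_le (f s) C) ->
  forall eps, 0 < eps ->
  exists (N : natset) (g : natset -> nat -> R),
    subset N M /\ infinite N /\
    (forall s, restrict B N s -> in_c00 (g s)) /\
    U_mapping (restrict B N) g /\
    (forall s, restrict B N s -> l1_norm_le (fun i => f s i - g s i) eps).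
Proof.
intros HM [B_members [B_antichain _]] _ f_internal [C f_bounded] eps Heps.
assert (B_fin : forall s, B s -> finset s) by (intros s Hs; apply (B_members s Hs)).
destruct (fusion (stable B f eps)) with (A := M) as [N [HN [HNM N_stable]]].
- intros t A A' _. apply stable_tail.
- intros t A. now apply (stable_dense B f C eps).
- exact HM.
- exists N, (approx B f eps N).
  split; [exact HNM | split; [exact HN | split; [| split; [split |]]]].
  + intros s; exact (approx_c00 B f eps B_fin N s).
  + apply approx_internal.
  + apply approx_uniform.
  + intros s Hs; exact (approx_l1_error B f eps B_fin Heps N N_stable s f_internal Hs).
Qed.
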